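(* Let $T$ be a tree and $\mathcal{M}$ a $2$-matching of $T^\ell$. Then \[ d(\mathcal{M},X)=x_{\ell(\mathcal{M})}+\text{(terms of lower total degree)}, \] where $x_{\ell(\mathcal{M})}=\prod_{uu\in\ell(\mathcal{M})}x_u$.
   Context: A tree is a simple connected graph without cycles. $L(T,X)$ is the matrix indexed by $V(T)$ with diagonal entries $x_u$ and off-diagonal entry $-1$ for adjacent vertices and $0$ otherwise. A $2$-matching of a graph (loops allowed) is a set $\mathcal{M}$ of edges such that every vertex is incident to at most two edges of $\mathcal{M}$ (a loop counts twice for incidence but as one edge). $T^\ell$ is $T$ with a loop added at each vertex; $\ell(\mathcal{M})$ is the set of loops in $\mathcal{M}$. Components of $\mathcal{M}$ are single loops or paths of $T$; orient each path $w_1\cdots w_{m+1}$ (either direction), with heads $\{w_2,\dots,w_{m+1}\}$ and tails $\{w_1,\dots,w_m\}$, a loop $uu$ having head and tail $u$; $h(\mathcal{M})$, $t(\mathcal{M})$ are the unions of heads, resp. tails, over all components. $d(\mathcal{M},X)=\pm\det L(T,X)[h(\mathcal{M}),t(\mathcal{M})]$ (rows $h(\mathcal{M})$, columns $t(\mathcal{M})$), the sign chosen so that the leading coefficient is positive. *)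

From mathcomp Require Import all_boot all_algebra.
From mathcomp Require Import mpoly.
Set Implicit Arguments. Unset Strict Implicit. Unset Printing Implicit Defensive.
Import GRing.Theory.
Local Open Scope ring_scope.

Definition is_tree (V : finType) (e : rel V) : Prop :=
  [/\ ssrbool.symmetric e, irreflexive e,
      (forall u v, connect e u v) &
      (forall c : seq V, (3 <= size c)%N -> ~ ucycle e c)].

(* Edges of T^l are represented as sets of vertices: a loop uu is [set u],
   a tree edge uv is [set u; v]. *)
Definition edge_of_Tl (V : finType) (e : rel V) (f : {set V}) : bool :=
  [exists u, f == [set u]] || [exists u, exists v, e u v && (f == [set u; v])].

(* Number of incidences of u in M (a loop counts twice). *)
Definition mdegree (V : finType) (M : {set {set V}}) (u : V) : nat :=
  (#|[set f in M | u \in f]| + ([set u] \in M))%N.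

Definition two_matching (V : finType) (e : rel V) (M : {set {set V}}) : Prop :=
  (forall f, f \in M -> edge_of_Tl e f) /\ (forall u, (mdegree M u <= 2)%N).

Definition loops (V : finType) (M : {set {set V}}) : {set V} :=
  [set u | [set u] \in M].

(* An orientation of the path components of M: a directed relation a
   orienting every non-loop edge of M in exactly one direction, such that
   every vertex has at most one outgoing and at most one incoming arc,
   i.e. every path w_1 ... w_{m+1} is oriented as a directed path
   (in one of its two directions). *)
Definition path_orientation (V : finType) (M : {set {set V}}) (a : rel V) : Prop :=
  [/\ (forall u v, a u v -> (u != v) && ([set u; v] \in M)),
      (forall u v, u != v -> [set u; v] \in M -> a u v (+) a v u),
      (forall u v w, a u v -> a u w -> v = w) &
      (forall u v w, a v u -> a w u -> v = w)].

(* heads: w_2 .. w_{m+1} of every oriented path, plus loop vertices *)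
Definition heads (V : finType) (M : {set {set V}}) (a : rel V) : {set V} :=
  [set v | ([set v] \in M) || [exists u, a u v]].
(* tails: w_1 .. w_m of every oriented path, plus loop vertices *)
Definition tails (V : finType) (M : {set {set V}}) (a : rel V) : {set V} :=
  [set u | ([set u] \in M) || [exists v, a u v]].

Definition xvar (V : finType) (u : V) : {mpoly int[#|V|]} := 'X_(enum_rank u).

Definition Lent (V : finType) (e : rel V) (u v : V) : {mpoly int[#|V|]} :=
  if u == v then xvar u else if e u v then -1 else 0.

(* det L(T,X)[H, K]: rows indexed by H, columns by K, both listed in the
   enumeration order of V (only meaningful when #|H| = #|K|, which holds
   for H = h(M), K = t(M); the overall sign is irrelevant below). *)
Definition subdet (V : finType) (e : rel V) (H K : {set V}) : {mpoly int[#|V|]} :=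
  \det (\matrix_(i < #|H|, j < #|H|)
          Lent e (enum_val i) (nth (enum_val i) (enum K) j)).

Definition xloops (V : finType) (M : {set {set V}}) : {mpoly int[#|V|]} :=
  \prod_(u in loops M) xvar u.

From mathcomp Require Import all_boot all_algebra all_fingroup.
From mathcomp Require Import mpoly zify.
Set Implicit Arguments. Unset Strict Implicit. Unset Printing Implicit Defensive.
Import GRing.Theory.
Local Open Scope ring_scope.

(* Match every head h with the tail tau h (head_to_tail): h itself if h
   carries a loop, otherwise the predecessor of h on its oriented path.
   tau is a bijection h(M) -> t(M), and the Leibniz term of the minor along
   tau is +-x_{l(M)}, since the entry (h, tau h) is x_h at a loop and -1 at
   an arc.  For any other permutation with a nonzero term, composing with
   tau^-1 gives a nontrivial permutation of the rows.  If a moved row had a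
   non-loop column u, with arc u -> v, following its cycle would give a walk
   from v back to u avoiding the edge uv, which is impossible in a tree.  So
   every moved row has a loop column; as some loop row is then off the
   diagonal, fewer than |l(M)| factors of the term are variables. *)

Lemma msize_prod_card n (R : idomainType) (I : finType) (P : pred I)
    (F : I -> {mpoly R[n]}) :
  (forall i, msize (F i) <= (P i).+1)%N -> (msize (\prod_i F i) <= #|P|.+1)%N.
Proof.
move=> hF; rewrite -sum1_card [X in (_ <= X.+1)%N]big_mkcond /=.
apply: (big_rec2 (fun G k => msize G <= k.+1)%N) => [|i G k _ hG].
  by rewrite msize1.
have [->|nzF] := eqVneq (F i) 0; first by rewrite mul0r msize0.
have [->|nzG] := eqVneq G 0; first by rewrite mulr0 msize0.
by rewrite msizeM //; move: (hF i) hG; rewrite unfold_in; case: (P i) => /=; lia.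
Qed.

Lemma msize_Lent (V : finType) (e : rel V) (u v : V) :
  (msize (Lent e u v) <= (u == v).+1)%N.
Proof.
rewrite /Lent; case: eqP => _; first by rewrite /xvar msizeX mdeg1.
by case: ifP; rewrite ?msizeN ?msize1 ?msize0.
Qed.

Lemma perm_closed_pred (T : finType) (p : {perm T}) (Q : pred T) x :
  (forall y, Q y -> Q (p y)) -> Q (p x) -> Q x.
Proof.
move=> Qp Qpx; have Qiter k : Q ((p ^+ k)%g (p x)).
  by elim: k => [|k IHk]; rewrite ?perm1 // expgSr permM Qp.
have := Qiter #[p]%g.-1.
by rewrite -permM -expgS prednK ?order_gt0 // expg_order perm1.
Qed.

Lemma eq_set2 (T : finType) (x y u v : T) : [set x; y] = [set u; v] ->
  (x = u /\ y = v) \/ (x = v /\ y = u).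
Proof.
move=> E.
have: x \in [set u; v] by rewrite -E set21.
have: y \in [set u; v] by rewrite -E set22.
have: u \in [set x; y] by rewrite E set21.
have: v \in [set x; y] by rewrite E set22.
by rewrite !inE => /orP[]/eqP? /orP[]/eqP? /orP[]/eqP? /orP[]/eqP?; subst; auto.
Qed.

Section DeleteEdge.
Variables (V : finType) (e : rel V).
Hypothesis acyc : forall c : seq V, (3 <= size c)%N -> ~ ucycle e c.

Definition del_edge (u v : V) : rel V :=
  [rel x y | e x y && ~~ (((x == u) && (y == v)) || ((x == v) && (y == u)))].

Lemma del_edge_disconnected u v :
  e u v -> u != v -> ~~ connect (del_edge u v) v u.
Proof.
move=> euv uv; apply/negP => /connectP[p vp].
case/shortenP: vp => q vq uq _ lst.
apply: (acyc (c := v :: q)); last first.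
  apply/andP; split=> //; rewrite /= rcons_path -lst euv andbT.
  by apply: sub_path vq => x y /andP[].
case: q vq lst {uq} => [|y [|z q]] //= => [_ E|/andP[vy _] E].
  by rewrite E eqxx in uv.
by move: vy; rewrite -E /del_edge /= !eqxx orbT andbF.
Qed.

Lemma connect_del_edge u v x y :
  ~~ connect (del_edge u v) v u -> connect (del_edge u v) v x ->
  e x y -> ~~ ((x == v) && (y == u)) -> connect (del_edge u v) v y.
Proof.
move=> vNu vx exy xy; apply: connect_trans (vx) (connect1 _).
rewrite /del_edge /= exy negb_or xy andbT /=.
apply/negP => /andP[/eqP xu _]; rewrite xu in vx; by rewrite vx in vNu.
Qed.

End DeleteEdge.

Section Orientation.
Variables (V : finType) (e : rel V) (M : {set {set V}}) (a : rel V).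
Hypotheses (e_sym : ssrbool.symmetric e)
  (acyc : forall c : seq V, (3 <= size c)%N -> ~ ucycle e c)
  (tm : two_matching e M) (po : path_orientation M a).

Local Notation L := (loops M).
Local Notation H := (heads M a).
Local Notation K := (tails M a).

Lemma loop_edgeE x f : x \in L -> f \in M -> x \in f -> f = [set x].
Proof.
rewrite inE => xM fM xf; apply/eqP; apply: contraT => fx.
have sub : [set [set x]; f] \subset [set g in M | x \in g].
  by apply/subsetP => g; rewrite !inE => /orP[]/eqP->; rewrite ?xM ?set11 ?fM.
have := subset_leq_card sub; rewrite cards2 eq_sym fx => two_le.
by have := tm.2 x; rewrite /mdegree xM addn1 ltnNge two_le.
Qed.

Lemma arc_neq u v : a u v -> u != v.
Proof. by case: po => h _ _ _ /h /andP[]. Qed.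

Lemma arc_mem u v : a u v -> [set u; v] \in M.
Proof. by case: po => h _ _ _ /h /andP[]. Qed.

Lemma arc_asym u v : a u v -> ~~ a v u.
Proof.
move=> auv; case: po => _ hx _ _.
by move: (hx u v (arc_neq auv) (arc_mem auv)); rewrite auv.
Qed.

Lemma arc_fun u v w : a u v -> a u w -> v = w.
Proof. by case: po => _ _ hf _; apply: hf. Qed.

Lemma arc_inj u v w : a v u -> a w u -> v = w.
Proof. by case: po => _ _ _ hf; apply: hf. Qed.

Lemma arc_edge u v : a u v -> e u v.
Proof.
move=> auv; have uv := arc_neq auv.
case/orP: (tm.1 _ (arc_mem auv)) => [/existsP[w /eqP E]|].
  have: u \in [set w] by rewrite -E set21.
  have: v \in [set w] by rewrite -E set22.
  by rewrite !inE => /eqP vw /eqP uw; rewrite uw vw eqxx in uv.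
case/existsP=> w /existsP[w' /andP[ew /eqP E]].
by case: (eq_set2 E) => [[-> ->]|[-> ->]] //; rewrite e_sym.
Qed.

Lemma arc_notin_loops u v : a u v -> (u \notin L) && (v \notin L).
Proof.
move=> auv; have uv := arc_neq auv; have uvM := arc_mem auv.
apply/andP; split; apply/negP => /loop_edgeE /(_ uvM).
  by move=> /(_ (set21 u v)) E; have := set22 u v; rewrite E inE eq_sym (negbTE uv).
by move=> /(_ (set22 u v)) E; have := set21 u v; rewrite E inE (negbTE uv).
Qed.

Lemma loops_heads : L \subset H.
Proof. by apply/subsetP => x; rewrite !inE => ->. Qed.

Lemma loops_tails : L \subset K.
Proof. by apply/subsetP => x; rewrite !inE => ->. Qed.

Definition head_to_tail (h : V) : V :=
  if h \in L then h else odflt h [pick u | a u h].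

Definition tail_to_head (k : V) : V :=
  if k \in L then k else odflt k [pick v | a k v].

Lemma head_to_tail_loop h : h \in L -> head_to_tail h = h.
Proof. by rewrite /head_to_tail => ->. Qed.

Lemma tail_to_head_loop k : k \in L -> tail_to_head k = k.
Proof. by rewrite /tail_to_head => ->. Qed.

Lemma head_to_tail_arc h : h \in H -> h \notin L -> a (head_to_tail h) h.
Proof.
rewrite /head_to_tail !inE => /orP[-> //|/existsP[u hu]] /negbTE ->.
by case: pickP => [//|/(_ u)]; rewrite hu.
Qed.

Lemma tail_to_head_arc k : k \in K -> k \notin L -> a k (tail_to_head k).
Proof.
rewrite /tail_to_head !inE => /orP[-> //|/existsP[u ku]] /negbTE ->.
by case: pickP => [//|/(_ u)]; rewrite ku.
Qed.

Lemma head_to_tail_mem h : h \in H -> head_to_tail h \in K.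
Proof.
move=> hH; have [hL|hNL] := boolP (h \in L).
  by rewrite head_to_tail_loop // (subsetP loops_tails).
by rewrite inE; apply/orP; right; apply/existsP; exists h; apply: head_to_tail_arc.
Qed.

Lemma tail_to_head_mem k : k \in K -> tail_to_head k \in H.
Proof.
move=> kK; have [kL|kNL] := boolP (k \in L).
  by rewrite tail_to_head_loop // (subsetP loops_heads).
by rewrite inE; apply/orP; right; apply/existsP; exists k; apply: tail_to_head_arc.
Qed.

Lemma head_to_tailK h : h \in H -> tail_to_head (head_to_tail h) = h.
Proof.
move=> hH; have [hL|hNL] := boolP (h \in L).
  by rewrite !head_to_tail_loop // tail_to_head_loop.
have ah := head_to_tail_arc hH hNL; have /andP[tNL _] := arc_notin_loops ah.
exact/esym/(arc_fun ah)/tail_to_head_arc/tNL/head_to_tail_mem.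
Qed.

Lemma tail_to_headK k : k \in K -> head_to_tail (tail_to_head k) = k.
Proof.
move=> kK; have [kL|kNL] := boolP (k \in L).
  by rewrite !tail_to_head_loop // head_to_tail_loop.
have ak := tail_to_head_arc kK kNL; have /andP[_ hNL] := arc_notin_loops ak.
exact/esym/(arc_inj ak)/head_to_tail_arc/hNL/tail_to_head_mem.
Qed.

Lemma card_heads_tails : #|H| = #|K|.
Proof.
have -> : K = head_to_tail @: H.
  apply/setP => k; apply/idP/imsetP => [kK|[h hH ->]]; last exact: head_to_tail_mem.
  by exists (tail_to_head k); rewrite ?tail_to_headK ?tail_to_head_mem.
by apply/esym/card_in_imset => x y xH yH E; rewrite -(head_to_tailK xH) E head_to_tailK.
Qed.

(* r and g list the rows and columns of a permutation term with nonzero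
   entries, reindexed by p so that the row after i is the head of g i. *)
Lemma moved_tail_loop (I : finType) (p : {perm I}) (r g : I -> V) :
  injective r -> (forall i, g i \in K) ->
  (forall i, r (p i) = tail_to_head (g i)) ->
  (forall i, r i = g i \/ e (r i) (g i)) ->
  forall i, p i != i -> g i \in L.
Proof.
move=> r_inj gK rp adj i pi; apply: contraT => uNL.
set u := g i in uNL; have auv := tail_to_head_arc (gK i) uNL.
set v := tail_to_head u in auv; have rpi : r (p i) = v by rewrite rp.
have vNu := del_edge_disconnected acyc (arc_edge auv) (arc_neq auv).
pose Q j := connect (del_edge e u v) v (r j).
have Qp j : Q j -> Q (p j).
  have [-> //|pj Qj] := eqVneq (p j) j.
  have Qg : connect (del_edge e u v) v (g j).
    have [<- //|ej] := adj j; apply: connect_del_edge vNu Qj ej _.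
    apply: contra pj => /andP[/eqP rjv /eqP gju].
    by apply/eqP/r_inj; rewrite rp gju rjv.
  rewrite /Q rp; have [gL|gNL] := boolP (g j \in L); first by rewrite tail_to_head_loop.
  have ag := tail_to_head_arc (gK j) gNL.
  apply: connect_del_edge vNu Qg (arc_edge ag) _.
  apply/negP => /andP[/eqP gjv /eqP tu].
  by move: ag; rewrite tu gjv => /arc_asym; rewrite auv.
have Qi : Q i by apply: perm_closed_pred Qp _; rewrite /Q rpi connect0.
have [riu|ei] := adj i; first by move: Qi; rewrite /Q riu (negbTE vNu).
suff: connect (del_edge e u v) v u by rewrite (negbTE vNu).
apply: connect_del_edge vNu Qi ei _; apply: contra pi => /andP[/eqP riv _].
by apply/eqP/r_inj; rewrite rpi riv.
Qed.

Definition row_vtx (i : 'I_#|H|) : V := enum_val i.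
Definition col_vtx (j : 'I_#|H|) : V := enum_val (A := K) (cast_ord card_heads_tails j).

Lemma row_vtx_inj : injective row_vtx.
Proof. exact: enum_val_inj. Qed.

Lemma row_vtx_mem i : row_vtx i \in H.
Proof. exact: enum_valP. Qed.

Lemma col_vtx_mem j : col_vtx j \in K.
Proof. exact: enum_valP. Qed.

Lemma col_vtx_surj k : k \in K -> exists j, col_vtx j = k.
Proof.
move=> kK; exists (cast_ord (esym card_heads_tails) (enum_rank_in kK k)).
by rewrite /col_vtx cast_ordKV enum_rankK_in.
Qed.

Lemma row_vtx_surj h : h \in H -> exists i, row_vtx i = h.
Proof. by move=> hH; exists (enum_rank_in hH h); rewrite /row_vtx enum_rankK_in. Qed.

Definition orient_fun (i : 'I_#|H|) : 'I_#|H| :=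
  odflt i [pick j | col_vtx j == head_to_tail (row_vtx i)].

Lemma col_orient_fun i : col_vtx (orient_fun i) = head_to_tail (row_vtx i).
Proof.
rewrite /orient_fun; case: pickP => [j /eqP //|none].
have [j hj] := col_vtx_surj (head_to_tail_mem (row_vtx_mem i)).
by move: (none j); rewrite hj eqxx.
Qed.

Lemma orient_fun_inj : injective orient_fun.
Proof.
move=> i1 i2 E; apply: row_vtx_inj.
rewrite -(head_to_tailK (row_vtx_mem i1)) -(head_to_tailK (row_vtx_mem i2)).
by rewrite -!col_orient_fun E.
Qed.

Definition orient_perm : {perm 'I_#|H|} := perm orient_fun_inj.

Definition Lmx : 'M[{mpoly int[#|V|]}]_#|H| :=
  \matrix_(i, j) Lent e (enum_val i) (nth (enum_val i) (enum K) j).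

Lemma LmxE i j : Lmx i j = Lent e (row_vtx i) (col_vtx j).
Proof.
rewrite mxE /col_vtx /row_vtx /enum_val; congr Lent; apply: set_nth_default.
by rewrite -cardE -card_heads_tails ltn_ord.
Qed.

Lemma row_shift (s : {perm 'I_#|H|}) i :
  row_vtx ((s * orient_perm^-1)%g i) = tail_to_head (col_vtx (s i)).
Proof.
rewrite permM; set k := (orient_perm^-1)%g (s i).
have -> : s i = orient_perm k by rewrite permKV.
by rewrite permE col_orient_fun head_to_tailK ?row_vtx_mem.
Qed.

Lemma moved_row_loop (s : {perm 'I_#|H|}) :
  (forall i, Lmx i (s i) != 0) ->
  forall i, (s * orient_perm^-1)%g i != i -> col_vtx (s i) \in L.
Proof.
move=> nz; apply: (moved_tail_loop row_vtx_inj) => [i|i|i].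
- exact: col_vtx_mem.
- exact: row_shift.
- move: (nz i); rewrite LmxE /Lent.
  case: (row_vtx i =P col_vtx (s i)) => [E _|_]; first by left.
  by case: ifP => [_ _|_]; [right|rewrite eqxx].
Qed.

Definition loop_rows : {set 'I_#|H|} := [set i | row_vtx i \in L].

Lemma loops_row_vtx : L = row_vtx @: loop_rows.
Proof.
apply/setP => u; apply/idP/imsetP => [uL|[i]]; last by rewrite inE => ? ->.
have [i ri] := row_vtx_surj (subsetP loops_heads _ uL).
by exists i; rewrite // inE ri.
Qed.

Lemma card_loop_rows : #|loop_rows| = #|L|.
Proof. by rewrite loops_row_vtx card_imset //; apply: row_vtx_inj. Qed.

Lemma card_diag_lt (s : {perm 'I_#|H|}) :
  s != orient_perm -> (forall i, Lmx i (s i) != 0) ->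
  (#|[pred i | row_vtx i == col_vtx (s i)]| < #|L|)%N.
Proof.
move=> s_neq nz; set p := (s * orient_perm^-1)%g; set D := [pred i | _].
have Dfix i : D i -> p i = i.
  rewrite inE => /eqP E; apply/eqP; apply: contraT => pi.
  move: (pi); rewrite -(inj_eq row_vtx_inj) row_shift -E tail_to_head_loop ?eqxx //.
  by rewrite E moved_row_loop.
have D_loop i : D i -> i \in loop_rows.
  move=> Di; rewrite inE; apply: contraT => iNL.
  have := tail_to_head_arc (col_vtx_mem (s i)).
  by rewrite -row_shift Dfix // -(eqP Di) => /(_ iNL) /arc_neq; rewrite eqxx.
have [i0 pi0] : exists i0, p i0 != i0.
  apply/existsP; apply: contraR s_neq => /existsPn fix_p; apply/eqP/permP => i.
  by move/negPn/eqP: (fix_p i); rewrite permM => E; rewrite -[in RHS]E permKV.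
rewrite -card_loop_rows; apply: proper_card; apply/properP; split.
  by apply/subsetP => i /D_loop.
exists (p i0); first by rewrite inE row_shift tail_to_head_loop moved_row_loop.
apply/negP => /Dfix /perm_inj E; by rewrite E eqxx in pi0.
Qed.

Lemma msize_other_term (s : {perm 'I_#|H|}) :
  s != orient_perm -> (msize (\prod_i Lmx i (s i)) <= #|L|)%N.
Proof.
move=> s_neq; have [i0 /eqP z|nz] := pickP (fun i => Lmx i (s i) == 0).
  by rewrite (bigD1 i0) //= z mul0r msize0.
apply: (leq_trans _ (card_diag_lt s_neq (fun i => negbT (nz i)))).
by apply: msize_prod_card => i; rewrite LmxE; apply: msize_Lent.
Qed.

Lemma orient_term : \prod_i Lmx i (orient_perm i) =
  xloops M * (-1) ^+ #|[pred i | row_vtx i \notin L]|.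
Proof.
have E i : Lmx i (orient_perm i) = if row_vtx i \in L then xvar (row_vtx i) else -1.
  rewrite LmxE permE col_orient_fun /Lent.
  have [iL|iNL] := boolP (row_vtx i \in L); first by rewrite head_to_tail_loop // eqxx.
  have ar := head_to_tail_arc (row_vtx_mem i) iNL.
  by rewrite eq_sym (negbTE (arc_neq ar)) e_sym (arc_edge ar).
rewrite (eq_bigr _ (fun i _ => E i)) (bigID (fun i => row_vtx i \in L)) /=.
congr (_ * _).
  rewrite /xloops [in RHS]loops_row_vtx big_imset /=; last by move=> ? ? _ _ /row_vtx_inj.
  by apply: eq_big => [i|i ->]; rewrite ?inE.
by rewrite -prodr_const; apply: eq_big => // i /negbTE ->.
Qed.

Lemma subdet_sign_xloops : exists s : int, (s = 1 \/ s = -1) /\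
  (msize (subdet e H K - s *: xloops M) <= #|L|)%N.
Proof.
set m := #|[pred i | row_vtx i \notin L]|.
exists ((-1) ^+ orient_perm * (-1) ^+ m); split.
  by rewrite -exprD -signr_odd; case: (odd _); [right|left].
have -> : ((-1) ^+ orient_perm * (-1) ^+ m : int) *: xloops M =
    (-1) ^+ orient_perm * \prod_i Lmx i (orient_perm i).
  by rewrite orient_term -mul_mpolyC rmorphM /= !rmorph_sign -mulrA [xloops M * _]mulrC.
have -> : subdet e H K = \det Lmx by [].
rewrite /determinant (bigD1 orient_perm) //=.
rewrite addrAC subrr add0r; apply: leq_trans (msize_sum _ _ _) _.
apply/bigmax_leqP => s s_neq.
by rewrite mulr_sign; case: ifP; rewrite ?msizeN => _; apply: msize_other_term.
Qed.

End Orientation.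

Theorem lemma3p2 (V : finType) (e : rel V) (M : {set {set V}}) (a : rel V) :
  is_tree e -> two_matching e M -> path_orientation M a ->
  exists s : int, (s = 1 \/ s = -1) /\
    (msize (subdet e (heads M a) (tails M a) - s *: xloops M) <= #|loops M|)%N.
Proof.
by case=> e_sym _ _ acyc tm po; apply: (subdet_sign_xloops e_sym acyc tm po).
Qed.
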